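(* Let $\ell$ be a positive odd integer with at most $t$ distinct prime factors. Suppose that for $i=1,\dots,s$ there are primes $p_{i,1}<p_{i,2}<\cdots<p_{i,t+1}$ with $p_{i,1}\ge 3$, such that for each $i$ any two of $p_{i,1}-1,\dots,p_{i,t+1}-1$ have no common odd prime factor, and such that $p_{i+1,t+1}<2p_{i,1}$ for $1\le i\le s-1$. Then for every integer $n$ with $p_{1,t+1}-1\le n\le 2p_{s,1}-2$, $\Omega_\ell(n)$ is not a powerful number.
   Context: A positive integer $a$ is called a powerful number if for every prime $p$, $p\mid a$ implies $p^2\mid a$. $\Omega_\ell(n)=\prod_{a=1}^{n}(a^\ell+1)$. *)

From mathcomp Require Import all_boot.
Set Implicit Arguments. Unset Strict Implicit. Unset Printing Implicit Defensive.

Definition powerful (a : nat) : Prop :=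
  0 < a /\ forall p : nat, prime p -> p %| a -> p ^ 2 %| a.

Definition Omega (l n : nat) : nat := \prod_(1 <= a < n.+1) (a ^ l + 1).

From mathcomp Require Import all_boot all_algebra ring zify.
Import GRing.Theory.

Set Implicit Arguments.
Unset Strict Implicit.
Unset Printing Implicit Defensive.

(* The heart of the argument is a single prime P with P ∤ l and
   gcd(l, P - 1) = 1, whose "window" [P - 1, 2P - 2] contains n:
   - binomial expansion gives (P-1)^l + 1 = P (mP + l) for odd l, so P divides
     the factor at a = P - 1 exactly once, because P ∤ l;
   - since x ↦ x^l is injective modulo P when gcd(l, P - 1) = 1, the only
     a ∈ [1, 2P - 2] with P | a^l + 1 is a = P - 1;
   hence the P-adic valuation of Omega_l(n) is exactly 1.
   Such a P is found among the primes p_{i,1} < ... < p_{i,t+1} of a family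
   by pigeonhole: each of the at most t prime factors of l can "hit" (divide
   p_{i,j} - 1, or equal p_{i,j}) at most one index j.  Finally, the chain
   condition p_{i+1,t+1} < 2 p_{i,1} makes the windows of consecutive
   families overlap, so some family i has n in its window. *)

Section BinomialCongruence.
Local Open Scope ring_scope.

Lemma subr1_expr_mod_sqr {R : comNzRingType} (x : R) (k : nat) :
  exists q : R, (x - 1) ^+ k = (-1) ^+ k * (1 - k%:R * x) + q * x ^+ 2.
Proof.
elim: k => [|k [q IH]]; first by exists 0; rewrite !expr0; ring.
exists ((x - 1) * q - (-1) ^+ k * k%:R).
by rewrite exprS IH mulrS (exprS (-1)); ring.
Qed.

Lemma pred_expn_odd_add1 (P l : nat) : (0 < P)%N -> odd l ->
  exists m : int, (P.-1 ^ l + 1)%N%:Z = (m * P%:Z + l%:Z) * P%:Z.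
Proof.
move=> P_gt0 l_odd; have [q Eq] := subr1_expr_mod_sqr P%:Z l.
exists q; rewrite PoszD -natz natrX natz predn_int // Eq.
by rewrite -signr_odd l_odd expr1; ring.
Qed.

End BinomialCongruence.

Lemma dvdn_pred_expn_odd_add1 (P l : nat) : 0 < P -> odd l ->
  P %| P.-1 ^ l + 1.
Proof.
move=> P_gt0 l_odd; have [m Em] := pred_expn_odd_add1 P_gt0 l_odd.
(* divisibility of integer casts of naturals is divisibility of naturals *)
suff : (P%:Z %| (P.-1 ^ l + 1)%:Z)%Z by [].
by rewrite Em dvdz_mull.
Qed.

Lemma sq_dvdn_pred_expn_odd_add1 (P l : nat) : 0 < P -> odd l ->
  (P ^ 2 %| P.-1 ^ l + 1) = (P %| l).
Proof.
move=> P_gt0 l_odd; have [m Em] := pred_expn_odd_add1 P_gt0 l_odd.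
have -> : (P ^ 2 %| P.-1 ^ l + 1) = (P%:Z * P%:Z %| (P.-1 ^ l + 1)%:Z)%Z.
  by rewrite -PoszM mulnn.
rewrite Em dvdz_mul2r; last by rewrite eqz_nat -lt0n.
by rewrite rpredDl ?dvdz_mull.
Qed.

Lemma fermat_iter (a P v : nat) : prime P -> a ^ (v * P.-1 + 1) = a %[mod P].
Proof.
move=> P_prime; elim: v => [|v IH]; first by rewrite mul0n add0n expn1.
have -> : v.+1 * P.-1 + 1 = v * P.-1 + P by have := prime_gt0 P_prime; lia.
by rewrite expnD -modnMmr fermat_little // modnMmr -expnSr -addn1.
Qed.

Lemma expn_inj_mod (P l a b : nat) : prime P -> 0 < l -> coprime l P.-1 ->
  a ^ l = b ^ l %[mod P] -> a = b %[mod P].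
Proof.
move=> P_prime l_gt0 co_lP Eab.
have [u _] := Bezoutl P.-1 l_gt0; rewrite (eqP co_lP) => /dvdnP [w Ew].
have Eu : u * P.-1 + 1 = w * l by rewrite addnC.
rewrite -(fermat_iter a u P_prime) -(fermat_iter b u P_prime) Eu.
by rewrite !(mulnC w) !expnM -modnXm Eab modnXm.
Qed.

Lemma dvdn_expn_add1_window (P l a : nat) : prime P -> odd l ->
  coprime l P.-1 -> 0 < a <= 2 * P - 2 -> P %| a ^ l + 1 -> a = P.-1.
Proof.
move=> P_prime l_odd co_lP /andP [a_gt0 a_le] Pa.
have P_gt0 := prime_gt0 P_prime.
have Pm1 := dvdn_pred_expn_odd_add1 P_gt0 l_odd.
have : a = P.-1 %[mod P].
  apply: expn_inj_mod (odd_gt0 l_odd) co_lP _ => //.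
  by apply/eqP; rewrite -(eqn_modDr 1) (eqP Pa) (eqP Pm1).
rewrite (modn_small (_ : P.-1 < P)) ?prednK // => a_mod.
have := divn_eq a P; rewrite a_mod.
case: (posnP (a %/ P)) => [-> | q_gt0]; first by rewrite mul0n add0n.
have : P <= a %/ P * P by rewrite leq_pmull.
lia.
Qed.

Lemma not_powerful_Omega_window (l n P : nat) : odd l -> prime P ->
  ~~ (P %| l) -> coprime l P.-1 -> P.-1 <= n -> n <= 2 * P - 2 ->
  ~ powerful (Omega l n).
Proof.
move=> l_odd P_prime P_ndvd_l co_lP n_ge n_le [_ Hpow].
have P_gt1 := prime_gt1 P_prime; have P_gt0 := ltnW P_gt1.
pose rest := \prod_(a <- index_iota 1 n.+1 | a != P.-1) (a ^ l + 1).
have E : Omega l n = (P.-1 ^ l + 1) * rest.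
  by rewrite /Omega (bigD1_seq P.-1) ?mem_index_iota ?iota_uniq //; lia.
have co_rest : coprime (P ^ 2) rest.
  rewrite coprimeXl // /rest big_seq_cond.
  apply: (big_ind (coprime P)) => [|x y|a]; first exact: coprimen1.
    by rewrite coprimeMr => -> ->.
  rewrite mem_index_iota prime_coprime // => /andP [a_range a_neq].
  apply: contra a_neq => Pa; apply/eqP.
  by apply: dvdn_expn_add1_window Pa => //; lia.
have : P ^ 2 %| P.-1 ^ l + 1.
  rewrite -(Gauss_dvdl _ co_rest) -E; apply: Hpow => //.
  by rewrite E dvdn_mulr // dvdn_pred_expn_odd_add1.
by rewrite sq_dvdn_pred_expn_odd_add1 // (negbTE P_ndvd_l).
Qed.

Lemma exists_unhit (T : eqType) (hit : nat -> T -> bool) (s : seq nat)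
    (D : seq T) : uniq D -> size s < size D ->
  (forall q j k, q \in s -> j \in D -> k \in D -> hit q j -> hit q k -> j = k) ->
  exists2 j, j \in D & ~~ has (hit^~ j) s.
Proof.
move=> D_uniq lt_sD hit_once; apply/allPn/negP => all_hit.
pose f j := nth 0 s (find (hit^~ j) s).
have fP j : j \in D -> f j \in s /\ hit (f j) j.
  move=> jD; have hj := allP all_hit j jD.
  by split; [rewrite mem_nth // -has_find | exact: (nth_find 0 hj)].
have f_inj : {in D &, injective f}.
  move=> j k jD kD Efjk; have [fj_s hj] := fP j jD; have [_ hk] := fP k kD.
  by apply: hit_once fj_s jD kD hj _; rewrite Efjk.
have : size D <= size s.
  rewrite -(size_map f); apply: uniq_leq_size; first by rewrite map_inj_in_uniq.
  by move=> _ /mapP [j jD ->]; exact: (fP j jD).1.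
by rewrite leqNgt lt_sD.
Qed.

Lemma chained_intervals_cover (a b : nat -> nat) (s n : nat) : 1 <= s ->
  (forall i, 1 <= i < s -> a i.+1 <= (b i).+1) -> a 1 <= n -> n <= b s ->
  exists2 i, 1 <= i <= s & a i <= n <= b i.
Proof.
elim: s => [|s IH] // _ chain n_ge n_le.
have [s0 | s_gt0] := posnP s; first by exists 1; rewrite // n_ge -s0.
case: (leqP n (b s)) => [n_le_s | n_gt_s].
  have chain_s : forall i, 1 <= i < s -> a i.+1 <= (b i).+1.
    by move=> i /andP [i_ge i_lt]; apply: chain; rewrite i_ge ltnS ltnW.
  have [i /andP [i_ge i_le] Hi] := IH s_gt0 chain_s n_ge n_le_s.
  by exists i; rewrite ?i_ge ?(leqW i_le).
by exists s.+1; rewrite ?leqnn //= n_le andbT; have := chain s; lia.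
Qed.

Section PrimeFamily.

Variables (t : nat) (P : nat -> nat).
Hypothesis P_incr : forall j, 1 <= j -> j < t.+1 -> P j < P j.+1.

Lemma P_lt (j k : nat) : 1 <= j -> j < k -> k <= t.+1 -> P j < P k.
Proof.
move=> j_ge jk k_le.
apply: (@homo_ltn_in _ [pred i | 1 <= i <= t.+1] P (fun x y => x < y)) (jk).
- exact: ltn_trans.
- by move=> x y xD yD z; move: xD yD; rewrite !inE; lia.
- by move=> i; rewrite !inE => /andP [i_ge _] /andP [_ i_lt]; exact: P_incr.
- by rewrite inE; lia.
- by rewrite inE; lia.
Qed.

Lemma P_bounds (j : nat) : 1 <= j <= t.+1 -> P 1 <= P j <= P t.+1.
Proof.
case/andP => j_ge j_le; apply/andP; split.
  move: (j_ge); rewrite leq_eqVlt => /orP [/eqP <- // | lt1j].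
  exact/ltnW/P_lt.
move: j_le; rewrite leq_eqVlt => /orP [/eqP -> // | ltjt].
exact/ltnW/P_lt.
Qed.

Hypothesis P_prime : forall j, 1 <= j <= t.+1 -> prime (P j).
Hypothesis P_pred_coprime : forall j k q, 1 <= j -> j < k -> k <= t.+1 ->
  prime q -> odd q -> q %| (P j).-1 -> ~~ (q %| (P k).-1).
Hypothesis P_narrow : P t.+1 < 2 * P 1.

Definition hits (q j : nat) : bool := (q %| (P j).-1) || (q == P j).

Lemma hits_unique (q j k : nat) : prime q -> odd q ->
  1 <= j -> j < k -> k <= t.+1 -> hits q j -> hits q k -> False.
Proof.
move=> q_prime q_odd j_ge jk k_le.
have Pjk := P_lt j_ge jk k_le.
have [/andP [P1j _] /andP [_ Pkt]] : (P 1 <= P j <= P t.+1) /\ (P 1 <= P k <= P t.+1).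
  by split; apply: P_bounds; lia.
have Pj_gt1 : 1 < P j by apply/prime_gt1/P_prime; lia.
have Pk_odd : odd (P k).
  have Pk_prime : prime (P k) by apply: P_prime; lia.
  by case: (even_prime Pk_prime) => // Pk2; lia.
rewrite /hits => /orP [q_dvd_j | /eqP q_Pj] /orP [q_dvd_k | /eqP q_Pk].
- by move: (P_pred_coprime j_ge jk k_le q_prime q_odd q_dvd_j); rewrite q_dvd_k.
- by have := dvdn_leq (_ : 0 < (P j).-1) q_dvd_j; lia.
- (* P k - 1 is even and divisible by the odd q = P j, so P k > 2 P j. *)
  have two_q_dvd : 2 * q %| (P k).-1.
    rewrite Gauss_dvd ?coprime2n // q_dvd_k andbT dvdn2.
    by move: Pk_odd; rewrite -{1}(prednK (ltnW (ltn_trans Pj_gt1 Pjk))).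
  by have := dvdn_leq (_ : 0 < (P k).-1) two_q_dvd; lia.
- by lia.
Qed.

(* Pigeonhole over the t + 1 indices against the at most t primes of l. *)
Lemma exists_admissible_prime (l : nat) : odd l -> size (primes l) <= t ->
  exists2 j, 1 <= j <= t.+1 & ~~ (P j %| l) && coprime l (P j).-1.
Proof.
move=> l_odd size_l.
have q_odd q : q \in primes l -> odd q.
  by rewrite mem_primes => /and3P [_ _ /dvdn_odd]; apply.
have [j j_range no_hit] : exists2 j, j \in iota 1 t.+1 & ~~ has (hits^~ j) (primes l).
  apply: exists_unhit; rewrite ?iota_uniq ?size_iota //.
  move=> q j k q_l; rewrite !mem_iota => j_range k_range hj hk.
  have q_prime : prime q by move: q_l; rewrite mem_primes => /andP [].
  case: (ltngtP j k) => // jk; exfalso.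
    by apply: (hits_unique q_prime (q_odd q q_l) _ jk _ hj hk); lia.
  by apply: (hits_unique q_prime (q_odd q q_l) _ jk _ hk hj); lia.
move: j_range; rewrite mem_iota => j_range; exists j; first by lia.
have Pj_prime : prime (P j) by apply: P_prime; lia.
have l_gt0 := odd_gt0 l_odd.
apply/andP; split.
  apply: contra no_hit => Pj_dvd_l; apply/hasP; exists (P j).
    by rewrite mem_primes Pj_prime l_gt0.
  by rewrite /hits eqxx orbT.
rewrite coprime_has_primes //; last by rewrite ltn_predRL prime_gt1.
apply: contra no_hit => /hasP [q q_Pj q_l]; apply/hasP; exists q => //.
by move: q_Pj; rewrite mem_primes /hits => /and3P [_ _ ->].
Qed.

End PrimeFamily.

Theorem lemma5 (l t s : nat) (p : nat -> nat -> nat)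
  (hl_pos : 0 < l) (hl_odd : odd l) (hl_t : size (primes l) <= t)
  (hs : 1 <= s)
  (hprime : forall i j, 1 <= i <= s -> 1 <= j <= t.+1 -> prime (p i j))
  (hincr : forall i j, 1 <= i <= s -> 1 <= j -> j < t.+1 -> p i j < p i j.+1)
  (hge3 : forall i, 1 <= i <= s -> 3 <= p i 1)
  (hodd : forall i j k q, 1 <= i <= s -> 1 <= j -> j < k -> k <= t.+1 ->
          prime q -> odd q -> q %| (p i j).-1 -> ~~ (q %| (p i k).-1))
  (hchain : forall i, 1 <= i -> i <= s.-1 -> p i.+1 t.+1 < 2 * p i 1)
  (n : nat) (hn1 : (p 1 t.+1).-1 <= n) (hn2 : n <= 2 * p s 1 - 2) :
  ~ powerful (Omega l n).
Proof.
have windows_chain i : 1 <= i < s -> (p i.+1 t.+1).-1 <= (2 * p i 1 - 2).+1.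
  by case/andP=> i_ge i_lt; have := hchain i i_ge; lia.
have [i i_range /andP [n_ge n_le]] :=
  @chained_intervals_cover (fun i => (p i t.+1).-1) (fun i => 2 * p i 1 - 2)
    s n hs windows_chain hn1 hn2.
have narrow : p i t.+1 < 2 * p i 1 by have := hge3 i i_range; lia.
have [j j_range /andP [P_ndvd_l co_lP]] :=
  exists_admissible_prime (fun j => hincr i j i_range)
    (fun j => hprime i j i_range) (fun j k q => hodd i j k q i_range)
    narrow hl_odd hl_t.
have /andP [P1_le P_le] := P_bounds (fun j => hincr i j i_range) j_range.
apply: (not_powerful_Omega_window hl_odd (hprime i j i_range j_range))
  P_ndvd_l co_lP _ _; lia.
Qed.
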